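(* Assume $\overline{c}>p$. Then there exist constants $K_2>0$ and $K_3>0$ such that $$V(x,c_1)-V(x,c_2)\le\left[K_2+\frac{K_3x}{(c_1-p)^2}\right](c_2-c_1)$$ for all $x\ge0$ and $p<c_1\le c_2\le\overline{c}$.
   Context: Cramér–Lundberg model: the uncontrolled surplus is $X_t=x+pt-\sum_{i=1}^{N_t}U_i$, where $x\ge0$ is the initial surplus, $p>0$ the premium rate, $N_t$ a Poisson process with intensity $\beta>0$, and the claims $U_i$ are i.i.d. positive random variables, independent of $N$, with continuous distribution function $F$; $p>\beta\mathbb{E}[U_1]$. Standing assumption (A1): $F$ is globally Lipschitz, $0\le F(y)-F(x)\le K(y-x)$ for $x<y$. Let $(\mathcal{F}_t)$ be the completed filtration generated by $X$. Fix $\overline{c}>0$ and $q>0$. $\Pi_{x,c,\overline{c}}$ is the set of càdlàg, adapted, non-decreasing processes $C$ with $c\le C_t\le\overline{c}$; $X^C_t=X_t-\int_0^tC_sds$ ($X_0=x$), $\tau=\inf\{t\ge0:X^C_t<0\}$, $J(x;C)=\mathbb{E}[\int_0^\tau e^{-qs}C_sds]$, $V(x,c)=\sup_{C\in\Pi_{x,c,\overline{c}}}J(x;C)$. *)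

From HB Require Import structures.
From mathcomp Require Import all_boot all_order all_algebra.
From mathcomp Require Import all_classical all_reals all_analysis.
Set Implicit Arguments. Unset Strict Implicit. Unset Printing Implicit Defensive.
Import Order.TTheory GRing.Theory Num.Theory.
Import numFieldNormedType.Exports.
Local Open Scope classical_set_scope.
Local Open Scope ring_scope.

Section CramerLundberg.
Context {R : realType} {d : measure_display} {T : measurableType d}
  (P : probability T R).

Definition mutual_indep (I : eqType) (S : set I) (X : I -> T -> R) : Prop :=
  (forall i, S i -> measurable_fun setT (X i)) /\
  forall (J : seq I) (B : I -> set R), uniq J -> (forall i, i \in J -> S i) ->
    (forall i, measurable (B i)) ->
    fine (P [set w | forall i, i \in J -> B i (X i w)]) =
    \prod_(i <- J) fine (P (X i @^-1` B i)).

(* Independence of two families (i.e. of the sigma-algebras they generate),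
   stated on finite-dimensional cylinder events. *)
Definition indep_families (I1 I2 : eqType) (X1 : I1 -> T -> R)
    (X2 : I2 -> T -> R) : Prop :=
  forall (J1 : seq I1) (J2 : seq I2) (B1 : I1 -> set R) (B2 : I2 -> set R),
    (forall i, measurable (B1 i)) -> (forall i, measurable (B2 i)) ->
    let A1 := [set w | forall i, i \in J1 -> B1 i (X1 i w)] in
    let A2 := [set w | forall i, i \in J2 -> B2 i (X2 i w)] in
    fine (P (A1 `&` A2)) = fine (P A1) * fine (P A2).

Definition poisson_process (beta : R) (N : R -> T -> nat) : Prop :=
  [/\ (forall w, N 0 w = 0%N),
      (forall w s t, 0 <= s -> s <= t -> (N s w <= N t w)%N),
      (forall w t, 0 <= t -> exists2 delta : R, 0 < delta &
          forall s, t <= s -> s < t + delta -> N s w = N t w),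
      (forall (n : nat) (t : nat -> R), 0 <= t 0%N ->
          (forall k, t k < t k.+1) ->
          mutual_indep [set k | (k < n)%N]
            (fun k w => (N (t k.+1) w)%:R - (N (t k) w)%:R)) &
      (forall s t (k : nat), 0 <= s -> s <= t ->
          fine (P [set w | (N t w - N s w)%N = k]) =
          expR (- (beta * (t - s))) * (beta * (t - s)) ^+ k / (k`!)%:R)].

Definition CL_model (beta : R) (F : R -> R) (N : R -> T -> nat)
    (U : nat -> T -> R) : Prop :=
  [/\ poisson_process beta N,
      (forall t, measurable_fun setT (fun w => (N t w)%:R : R)),
      mutual_indep setT U,
      (forall n w, 0 < U n w) /\
      (forall n y, F y = fine (P [set w | U n w <= y])) &
      indep_families U (fun t w => (N t w)%:R)].

(* Uncontrolled surplus X_t = x + p t - sum_{i=1}^{N_t} U_i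
   (claims indexed from 0 here). *)
Definition surplus (x p : R) (N : R -> T -> nat) (U : nat -> T -> R)
    (t : R) (w : T) : R :=
  x + p * t - \sum_(i < N t w) U i w.

Definition nat_filtration (x p : R) N U (t : R) : set (set T) :=
  [set A | exists2 B,
     <<s [set E | exists s (G : set R), [/\ 0 <= s, s <= t, measurable G &
            E = surplus x p N U s @^-1` G]] >> B &
     P.-negligible ((A `\` B) `|` (B `\` A))].

Definition admissible (x p : R) N U (c cbar : R) : set (R -> T -> R) :=
  [set C | [/\
     (forall t (G : set R), 0 <= t -> measurable G ->
         nat_filtration x p N U t (C t @^-1` G)),
     (forall w t, 0 <= t -> C s w @[s --> t^'+] --> C t w),
     (forall w t, 0 < t -> cvg (C s w @[s --> t^'-])),
     (forall w s t, 0 <= s -> s <= t -> C s w <= C t w) &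
     (forall w t, 0 <= t -> c <= C t w /\ C t w <= cbar)]].

Definition controlled_surplus (x p : R) N U (C : R -> T -> R) (t : R) (w : T)
  : R :=
  surplus x p N U t w - Rintegral lebesgue_measure `[0, t] (fun s => C s w).

Definition ruin_time (x p : R) N U (C : R -> T -> R) (w : T) : \bar R :=
  ereal_inf [set t%:E | t in [set t | 0 <= t /\
                                      controlled_surplus x p N U C t w < 0]].

Definition value_J (q x p : R) N U (C : R -> T -> R) : \bar R :=
  (\int[P]_w (\int[lebesgue_measure]_(s in
      [set s : R | (0 <= s)%R /\ (s%:E < ruin_time x p N U C w)%E])
        (expR (- (q * s)) * C s w)%R%:E))%E.

Definition value_V (q cbar x p : R) N U (c : R) : \bar R :=
  ereal_sup [set value_J q x p N U C | C in admissible x p N U c cbar].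

End CramerLundberg.

From HB Require Import structures.
From mathcomp Require Import all_boot all_order all_algebra.
From mathcomp Require Import all_classical all_reals all_analysis.
From mathcomp Require Import measurable_realfun ring lra.
Import Order.TTheory GRing.Theory Num.Theory.
Import numFieldNormedType.Exports HBNNSimple.
Local Open Scope classical_set_scope.
Local Open Scope ring_scope.
Set Implicit Arguments. Unset Strict Implicit. Unset Printing Implicit Defensive.

(* If C is admissible for the floor c1, then C' := max(C, c2) is admissible
   for c2 and C <= C' <= C + (c2 - c1).  Path by path, C' >= c1 > p keeps the
   C'-surplus below x - (c1 - p) t, so C' is ruined at some time
   b <= x / (c1 - p).  If C' is ruined at time t, then C is ruined by time
   (1 + D) t with D = (c2 - c1) / (c1 - p): up to time t, C has paid at most
   (c2 - c1) t less than C', and after t its surplus drifts down at rate at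
   least c1 - p.  So the ruin time a of C is at most (1 + D) b, and the
   discounted dividends of C exceed those of C' by at most
   cbar (a - b)^+ <= cbar D b <= cbar D x / (c1 - p).  Taking expectations and suprema gives
   V(x, c1) <= V(x, c2) + cbar (c2 - c1) x / (c1 - p)^2, hence the bound with
   K2 = 1 and K3 = cbar. *)

Section Rintegral_comparison.
Context d (T : measurableType d) (R : realType) (mu : {measure set T -> \bar R}).
Variable A : set T.
Hypotheses (mA : measurable A) (muA : (mu A < +oo)%E).

Lemma integrable_cst_finite (k : R) : mu.-integrable A (EFin \o cst k).
Proof.
exact: measurable_bounded_integrable (measurable_cst _) (bounded_cst _ _).
Qed.

Lemma le_Rintegral_shift (f g : T -> R) (k : R) :
  mu.-integrable A (EFin \o f) -> mu.-integrable A (EFin \o g) ->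
  (forall t, A t -> f t <= g t + k) ->
  \int[mu]_(t in A) f t <= \int[mu]_(t in A) g t + k * fine (mu A).
Proof.
move=> intf intg fgk; have intk := integrable_cst_finite k.
rewrite -Rintegral_cst // -RintegralD //; apply: le_Rintegral => //.
exact: (integrableD mA intg intk).
Qed.

Lemma Rintegral_ge_cst (f : T -> R) (c : R) :
  mu.-integrable A (EFin \o f) -> (forall t, A t -> c <= f t) ->
  c * fine (mu A) <= \int[mu]_(t in A) f t.
Proof.
move=> intf cf; rewrite -Rintegral_cst //.
by apply: le_Rintegral => //; exact: integrable_cst_finite.
Qed.

End Rintegral_comparison.

Lemma lebesgue_measure_itv_bnd (R : realType) (b1 b2 : bool) (u v : R) :
  u <= v ->
  lebesgue_measure ([set` Interval (BSide b1 u) (BSide b2 v)] : set R) = (v - u)%:E.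
Proof.
rewrite lebesgue_measure_itv /= lte_fin le_eqVlt => /predU1P[->|->//].
by rewrite ltxx subrr.
Qed.

Lemma lebesgue_measure_itv_bnd_lty (R : realType) (b1 b2 : bool) (u v : R) :
  (lebesgue_measure ([set` Interval (BSide b1 u) (BSide b2 v)] : set R) < +oo)%E.
Proof. by rewrite lebesgue_measure_itv; case: ifP => _; rewrite ?ltry. Qed.

Section nondecreasing_on_nonneg.
Context {R : realType} (g : R -> R).
Hypothesis g_nd : forall s t, 0 <= s -> s <= t -> g s <= g t.

Lemma measurable_fun_nondecreasing (D : set R) :
  measurable D -> D `<=` `[0, +oo[ -> measurable_fun D g.
Proof.
move=> mD D0; have : measurable_fun D (fun s => g (Num.max s 0)).
  apply: nondecreasing_measurable => // s t st.
  apply: g_nd; first by rewrite le_max lexx orbT.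
  by rewrite ge_max !le_max st lexx !orbT.
apply: eq_measurable_fun => s; rewrite inE => /D0.
by rewrite /= in_itv /= andbT => s0; rewrite max_l.
Qed.

Lemma integrable_nondecreasing (D : set R) (t : R) :
  measurable D -> D `<=` `[0, t] -> lebesgue_measure.-integrable D (EFin \o g).
Proof.
move=> mD Dt; apply: measurable_bounded_integrable => //.
- have mDt : (lebesgue_measure D <= lebesgue_measure `[0%R, t])%E.
    by apply: le_measure; rewrite ?inE.
  exact: (le_lt_trans mDt (lebesgue_measure_itv_bnd_lty _ _ _ _)).
- apply: measurable_fun_nondecreasing => // s /Dt.
  by rewrite /= !in_itv /= => /andP[->].
rewrite /bounded_near; near=> M => s /Dt; rewrite /= in_itv /= => /andP[s0 st].
apply: (@le_trans _ _ (`|g 0| + `|g t|)); last by near: M; exact: nbhs_pinfty_ge.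
have := g_nd (lexx 0) s0; have := g_nd s0 st.
have := ler_norm (- g 0); have := ler_norm (g t); rewrite normrN ler_norml.
have := normr_ge0 (g 0); have := normr_ge0 (g t); lra.
Unshelve. all: end_near.
Qed.

Lemma Rintegral_itv0_ge (c t : R) : 0 <= t ->
  (forall s, 0 <= s -> s <= t -> c <= g s) ->
  c * t <= \int[lebesgue_measure]_(s in `[0, t]) g s.
Proof.
move=> t0 cg.
have mu_t : fine (lebesgue_measure `[0, t]) = t.
  by rewrite lebesgue_measure_itv_bnd //= subr0.
rewrite -[X in c * X]mu_t; apply: Rintegral_ge_cst => //.
- exact: lebesgue_measure_itv_bnd_lty.
- exact: integrable_nondecreasing (measurable_itv _) (@subset_refl R _).
by move=> s; rewrite /= in_itv /= => /andP[]; exact: cg.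
Qed.

Lemma Rintegral_itv0_splitr_ge (c t u : R) : 0 <= t -> t <= u ->
  (forall s, t < s -> s <= u -> c <= g s) ->
  \int[lebesgue_measure]_(s in `[0, t]) g s + c * (u - t) <=
  \int[lebesgue_measure]_(s in `[0, u]) g s.
Proof.
move=> t0 tu cg.
have intg := integrable_nondecreasing (measurable_itv `[0, u]) (@subset_refl R _).
rewrite -lerBrDl (Rintegral_itvB (x := t) intg) ?bnd_simp //.
have mu_tu : fine (lebesgue_measure `]t, u]) = u - t.
  by rewrite lebesgue_measure_itv_bnd.
rewrite -[X in c * X]mu_tu; apply: Rintegral_ge_cst => //.
- exact: lebesgue_measure_itv_bnd_lty.
- apply: integrable_nondecreasing (measurable_itv _) _.
  by apply: subset_itvr; rewrite bnd_simp.
by move=> s; rewrite /= in_itv /= => /andP[]; exact: cg.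
Qed.

End nondecreasing_on_nonneg.

Lemma Rintegral_itv0_le_shift (R : realType) (f g : R -> R) (k t : R) :
  (forall s u, 0 <= s -> s <= u -> f s <= f u) ->
  (forall s u, 0 <= s -> s <= u -> g s <= g u) -> 0 <= t ->
  (forall s, 0 <= s -> s <= t -> f s <= g s + k) ->
  \int[lebesgue_measure]_(s in `[0, t]) f s <=
  \int[lebesgue_measure]_(s in `[0, t]) g s + k * t.
Proof.
move=> f_nd g_nd t0 fgk.
have mu_t : fine (lebesgue_measure `[0, t]) = t.
  by rewrite lebesgue_measure_itv_bnd //= subr0.
rewrite -[X in k * X]mu_t; apply: le_Rintegral_shift => //.
- exact: lebesgue_measure_itv_bnd_lty.
- exact: (integrable_nondecreasing f_nd (measurable_itv _) (@subset_refl R _)).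
- exact: (integrable_nondecreasing g_nd (measurable_itv _) (@subset_refl R _)).
by move=> s; rewrite /= in_itv /= => /andP[]; exact: fgk.
Qed.

Lemma ge0_integral_itv0_le_shift (R : realType) (f g : R -> R) (k a b e : R) :
  0 <= b -> 0 <= e -> a <= b + e ->
  measurable_fun (`[0, +oo[ : set R) f -> measurable_fun (`[0, +oo[ : set R) g ->
  (forall s, 0 <= s -> 0 <= f s <= k) -> (forall s, 0 <= s -> f s <= g s) ->
  (\int[lebesgue_measure]_(s in `[0%R, a[) (f s)%:E <=
   \int[lebesgue_measure]_(s in `[0%R, b[) (g s)%:E + (k * e)%:E)%E.
Proof.
move=> b0 e0 abe mf mg fk fg.
have itv0 (b1 b2 : bool) (u v : R) : 0 <= u ->
    [set` Interval (BSide b1 u) (BSide b2 v)] `<=` (`[0, +oo[ : set R).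
  move=> u0 s; rewrite /= !in_itv /= andbT => /andP[us _].
  by case: b1 us => /= [|/ltW] us; exact: le_trans u0 us.
have mS (h : R -> R) (b1 b2 : bool) (u v : R) :
    measurable_fun (`[0, +oo[ : set R) h -> 0 <= u ->
    measurable_fun [set` Interval (BSide b1 u) (BSide b2 v)] (EFin \o h).
  move=> mh u0; apply/measurable_EFinP.
  exact: measurable_funS (measurable_itv _) (itv0 _ _ _ v u0) mh.
have f0 (b1 b2 : bool) (u v : R) : 0 <= u ->
    forall s, [set` Interval (BSide b1 u) (BSide b2 v)] s -> (0 <= (f s)%:E)%E.
  by move=> u0 s /(itv0 _ _ _ _ u0); rewrite /= in_itv /= andbT lee_fin => /fk /andP[].
have sub_abe : `[0, a[ `<=` `[0, b + e[ by apply: subset_itvl; rewrite bnd_simp.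
have := ge0_subset_integral lebesgue_measure (measurable_itv _) (measurable_itv _)
  (mS _ _ _ _ _ mf (lexx 0)) (f0 _ _ _ _ (lexx 0)) sub_abe.
move/le_trans; apply.
rewrite (@itv_bndbnd_setU _ _ _ (BLeft b)) ?bnd_simp ?lerDl //.
rewrite ge0_integral_setU //; last 3 first.
- by rewrite -itv_bndbnd_setU ?bnd_simp ?lerDl //; exact: mS.
- by rewrite -itv_bndbnd_setU ?bnd_simp ?lerDl //; exact: f0.
- rewrite disj_set2E; apply/eqP/seteqP; split => s //=.
  by rewrite !in_itv /= => -[/andP[_ sb] /andP[bs _]]; lra.
apply: leeD.
  apply: ge0_le_integral => //; first exact: f0; first exact: mS.
    exact: mS.
  by move=> s /(itv0 _ _ _ _ (lexx 0)); rewrite /= in_itv /= andbT lee_fin => /fg.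
have fk' s : [set` `[b, b + e[] s -> ((f s)%:E <= k%:E)%E.
  by move=> /(itv0 _ _ _ _ b0); rewrite /= in_itv /= andbT lee_fin => /fk /andP[].
have := ge0_le_integral lebesgue_measure (measurable_itv _) (f0 _ _ _ _ b0)
  (mS _ _ _ _ _ mf b0) (measurable_cst _) fk'.
move/le_trans; apply.
by rewrite integral_cst //= lebesgue_measure_itv_bnd ?lerDl // addrAC subrr add0r.
Qed.

Section nnsfun_sub_cst.
Context d (T : measurableType d) (R : realType) (h : {nnsfun T >-> R}) (M : R).

Definition sub_cst_pos (w : T) : R := Num.max (h w - M) 0.

Lemma measurable_sub_cst_pos : measurable_fun setT sub_cst_pos.
Proof.
apply: measurable_maxr; last exact: measurable_cst.
by apply: measurable_funB => //; exact: measurable_cst.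
Qed.

Lemma finite_range_sub_cst_pos : finite_set (range sub_cst_pos).
Proof.
rewrite (_ : range _ = (fun y => Num.max (y - M) 0) @` range h).
  exact/finite_image/fimfunP.
by rewrite image_comp.
Qed.

Lemma sub_cst_pos_ge0 w : 0 <= sub_cst_pos w.
Proof. by rewrite le_max lexx orbT. Qed.

HB.instance Definition _ :=
  isMeasurableFun.Build d _ T R sub_cst_pos measurable_sub_cst_pos.
HB.instance Definition _ :=
  FiniteImage.Build T R sub_cst_pos finite_range_sub_cst_pos.
HB.instance Definition _ := isNonNegFun.Build T R sub_cst_pos sub_cst_pos_ge0.

Definition sub_cst_pos_nnsfun : {nnsfun T >-> R} := sub_cst_pos.

End nnsfun_sub_cst.

(* No measurability is needed: the integral of a nonnegative function is a
   supremum over simple functions, and if [h <= f] is simple, then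
   [max (h - M) 0 <= g] is simple too. *)
Lemma ge0_integral_le_shift d (T : measurableType d) (R : realType)
    (mu : {measure set T -> \bar R}) (f g : T -> \bar R) (M : R) :
  0 <= M -> (forall w, (0 <= f w)%E) -> (forall w, (0 <= g w)%E) ->
  (forall w, (f w <= g w + M%:E)%E) ->
  (\int[mu]_w f w <= \int[mu]_w g w + M%:E * mu setT)%E.
Proof.
move=> M0 f0 g0 fgM; rewrite (ge0_integralTE _ f0).
apply: ge_ereal_sup => _ [h /= hf <-].
pose cM := cst_nnsfun T (NngNum M0).
have h_le w : h w <= (add_nnsfun (sub_cst_pos_nnsfun h M) cM) w.
  by rewrite /= /sub_cst_pos -lerBlDr le_max lexx.
apply: le_trans (le_sintegral mu h_le) _; rewrite sintegralD; apply: leeD.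
  rewrite (ge0_integralTE _ g0); apply: ereal_sup_ubound.
  exists (sub_cst_pos_nnsfun h M) => //= w.
  rewrite /sub_cst_pos; have := hf w; have := fgM w; have := g0 w.
  case: (g w) => [r| |] //=; rewrite ?leey // lee_fin => r0 fr hfw.
  by rewrite lee_fin ge_max r0 andbT lerBlDr -lee_fin (le_trans hfw fr).
by rewrite -integralT_nnsfun /= integral_cst.
Qed.

Section pathwise_ruin.
Context {R : realType} {d : measure_display} {T : measurableType d}.
Variables (x p : R) (N : R -> T -> nat) (U : nat -> T -> R) (w : T).
Hypothesis N_nd : forall s t, 0 <= s -> s <= t -> (N s w <= N t w)%N.
Hypothesis U_gt0 : forall n, 0 < U n w.

Definition rate_path (c : R) (C : R -> T -> R) : Prop :=
  (forall s t, 0 <= s -> s <= t -> C s w <= C t w) /\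
  (forall t, 0 <= t -> c <= C t w).

Definition ruin_set (C : R -> T -> R) : set R :=
  [set t | 0 <= t /\ controlled_surplus x p N U C t w < 0].

Lemma claims_ge0 t : 0 <= \sum_(i < N t w) U i w.
Proof. by apply: sumr_ge0 => i _; exact: ltW. Qed.

Lemma claims_nd s t : 0 <= s -> s <= t ->
  \sum_(i < N s w) U i w <= \sum_(i < N t w) U i w.
Proof.
move=> s0 st; rewrite -(subnKC (N_nd s0 st)) big_split_ord /= lerDl.
by apply: sumr_ge0 => i _; exact: ltW.
Qed.

Variable c : R.
Hypothesis p_lt_c : p < c.
Hypothesis x_ge0 : 0 <= x.

Lemma controlled_surplus_le C t : rate_path c C -> 0 <= t ->
  controlled_surplus x p N U C t w <= x - (c - p) * t.
Proof.
move=> [C_nd C_ge] t0; have := Rintegral_itv0_ge C_nd t0 (fun s s0 _ => C_ge s s0).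
rewrite /controlled_surplus /surplus; have := claims_ge0 t; lra.
Qed.

Lemma ruin_set_gt C t : rate_path c C -> x / (c - p) < t -> ruin_set C t.
Proof.
move=> C_rate xt; have cp : 0 < c - p by rewrite subr_gt0.
have x_le : x < (c - p) * t by rewrite mulrC -ltr_pdivrMr.
have t0 : 0 <= t by rewrite (le_trans _ (ltW xt)) // divr_ge0 // ltW.
by split=> //; apply: le_lt_trans (controlled_surplus_le C_rate t0) _; lra.
Qed.

Lemma ruin_set_lbound C : lbound (ruin_set C) 0.
Proof. by move=> t []. Qed.

Lemma ruin_set_neq0 C : rate_path c C -> ruin_set C !=set0.
Proof.
by move=> C_rate; exists (x / (c - p) + 1); apply: ruin_set_gt C_rate _; rewrite ltrDl.
Qed.

Lemma ruin_timeE C : rate_path c C ->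
  ruin_time x p N U C w = (inf (ruin_set C))%:E.
Proof.
move=> C_rate; apply: ereal_inf_EFin; last exact: ruin_set_neq0.
by exists 0; exact: ruin_set_lbound.
Qed.

Lemma inf_ruin_set_ge0 C : rate_path c C -> 0 <= inf (ruin_set C).
Proof.
by move=> C_rate; apply: lb_le_inf; [exact: ruin_set_neq0|exact: ruin_set_lbound].
Qed.

Lemma inf_ruin_set_le C : rate_path c C -> inf (ruin_set C) <= x / (c - p).
Proof.
move=> C_rate; apply/ler_addgt0Pr => eps eps0.
apply: ge_inf; first by exists 0; exact: ruin_set_lbound.
by apply: ruin_set_gt C_rate _; rewrite ltrDl.
Qed.

Lemma ruin_set_delay C C' e t : 0 <= e -> rate_path c C -> rate_path c C' ->
  (forall s, 0 <= s -> C' s w <= C s w + e) ->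
  ruin_set C' t -> ruin_set C (t + e / (c - p) * t).
Proof.
move=> e0 [C_nd C_ge] [C'_nd _] C'_le [t0 ruin_t].
have cp : 0 < c - p by rewrite subr_gt0.
have tD : t <= t + e / (c - p) * t by rewrite lerDl mulr_ge0 // divr_ge0 // ltW.
have delay : (c - p) * (e / (c - p) * t) = e * t.
  by rewrite mulrA mulrCA divff ?mulr1 // gt_eqF.
have I_C := Rintegral_itv0_splitr_ge C_nd t0 tD
  (fun s ts _ => C_ge s (le_trans t0 (ltW ts))).
have I_C' := Rintegral_itv0_le_shift C'_nd C_nd t0 (fun s s0 _ => C'_le s s0).
have S := claims_nd t0 tD.
split; first exact: le_trans tD.
move: ruin_t; rewrite /controlled_surplus /surplus; lra.
Qed.

Lemma inf_ruin_set_delay C C' e : 0 <= e -> rate_path c C -> rate_path c C' ->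
  (forall s, 0 <= s -> C' s w <= C s w + e) ->
  inf (ruin_set C) <= (1 + e / (c - p)) * inf (ruin_set C').
Proof.
move=> e0 C_rate C'_rate C'_le.
have D1 : 0 < 1 + e / (c - p) by rewrite ltr_wpDr // divr_ge0 // ltW // subr_gt0.
rewrite mulrC -ler_pdivrMr //; apply: lb_le_inf; first exact: ruin_set_neq0.
move=> t ruin_t; rewrite ler_pdivrMr // mulrC mulrDl mul1r.
apply: ge_inf; first by exists 0; exact: ruin_set_lbound.
exact: ruin_set_delay e0 C_rate C'_rate C'_le ruin_t.
Qed.

Hypothesis p_ge0 : 0 <= p.

Lemma discounted_dividends_le q cbar e C C' : 0 <= q -> 0 <= e ->
  rate_path c C -> rate_path c C' -> (forall t, 0 <= t -> C t w <= cbar) ->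
  (forall t, 0 <= t -> C t w <= C' t w <= C t w + e) ->
  (\int[lebesgue_measure]_(s in [set s : R | (0 <= s)%R /\
       (s%:E < ruin_time x p N U C w)%E]) (expR (- (q * s)) * C s w)%R%:E <=
   \int[lebesgue_measure]_(s in [set s : R | (0 <= s)%R /\
       (s%:E < ruin_time x p N U C' w)%E]) (expR (- (q * s)) * C' s w)%R%:E
   + (cbar * e * x / (c - p) ^+ 2)%:E)%E.
Proof.
move=> q0 e0 C_rate C'_rate C_le CC'.
have cp : 0 < c - p by rewrite subr_gt0.
have C_ge0 t : 0 <= t -> 0 <= C t w.
  by move=> t0; rewrite (le_trans _ (C_rate.2 t t0)) // (le_trans p_ge0) // ltW.
have domE (r : R) :
    [set s : R | (0 <= s)%R /\ (s%:E < r%:E)%E] = [set` `[0, r[].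
  apply/seteqP; split => s /=; rewrite in_itv /= lte_fin.
    by case=> -> ->.
  by case/andP=> -> ->.
rewrite (ruin_timeE C_rate) (ruin_timeE C'_rate) !domE.
have m_exp (D : set R) : measurable D -> measurable_fun D (fun s => expR (- (q * s))).
  move=> mD; apply: nonincreasing_measurable => // s t st.
  by rewrite ler_expR lerN2 ler_wpM2l.
have m_dividends (K : R -> T -> R) : rate_path c K ->
    measurable_fun (`[0, +oo[ : set R) (fun s => expR (- (q * s)) * K s w).
  move=> K_rate; apply: measurable_funM; first exact: m_exp.
  exact: measurable_fun_nondecreasing K_rate.1 _ (measurable_itv _) (@subset_refl R _).
have D0 : 0 <= e / (c - p) by rewrite divr_ge0 // ltW.
have b0 := inf_ruin_set_ge0 C'_rate.
have ab : inf (ruin_set C) <= inf (ruin_set C') + e / (c - p) * inf (ruin_set C').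
  by rewrite -[X in X + _]mul1r -mulrDl; apply: inf_ruin_set_delay => // t /CC' /andP[].
have cbar0 : 0 <= cbar := le_trans (C_ge0 0 (lexx 0)) (C_le 0 (lexx 0)).
have gap : cbar * (e / (c - p) * inf (ruin_set C')) <= cbar * e * x / (c - p) ^+ 2.
  rewrite (_ : _ / _ ^+ 2 = cbar * (e / (c - p) * (x / (c - p)))).
    by rewrite !ler_wpM2l // inf_ruin_set_le.
  by field; exact: lt0r_neq0.
have := @ge0_integral_itv0_le_shift R (fun s => expR (- (q * s)) * C s w)
  (fun s => expR (- (q * s)) * C' s w) cbar _ _ _ b0 (mulr_ge0 D0 b0) ab
  (m_dividends _ C_rate) (m_dividends _ C'_rate).
move/(_ _ _)/le_trans; apply.
- move=> s s0; rewrite mulr_ge0 ?expR_ge0 ?C_ge0 //=.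
  rewrite -[cbar]mul1r ler_pM ?expR_ge0 ?C_ge0 ?C_le //.
  by rewrite expR_le1 oppr_le0 mulr_ge0.
- by move=> s s0; rewrite ler_wpM2l ?expR_ge0 //; have /andP[] := CC' s s0.
by rewrite leeD2l // lee_fin.
Qed.

End pathwise_ruin.

Lemma continuous_max_cst (R : realType) (c : R) : continuous (fun y : R => Num.max y c).
Proof.
by move=> y; apply: (@continuous_max _ R^o (fun y => y) (fun _ => c));
  [exact: cvg_id|exact: cvg_cst].
Qed.

Section admissible_strategies.
Context {R : realType} {d : measure_display} {T : measurableType d}.
Variables (P : probability T R) (x p : R) (N : R -> T -> nat) (U : nat -> T -> R).

Lemma admissible_max (c c' cbar : R) (C : R -> T -> R) : c' <= cbar ->
  admissible P x p N U c cbar C ->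
  admissible P x p N U c' cbar (fun t w => Num.max (C t w) c').
Proof.
move=> c'_le [C_adapted C_right C_left C_nd C_bd].
have max_cvg (F : set_system R) (FF : Filter F) (f : R -> R) (l : R) :
    f @ F --> l -> (fun s => Num.max (f s) c') @ F --> Num.max l c'.
  exact: (@continuous_cvg _ _ _ _ _ _ (fun y => Num.max y c') _
           (@continuous_max_cst R c' _)).
split.
- move=> t G t0 mG.
  have m_max : measurable_fun setT (fun y : R => Num.max y c').
    by apply: measurable_maxr => //; exact: measurable_cst.
  have mG' : measurable [set y : R | G (Num.max y c')].
    by rewrite -[X in measurable X]setTI; exact: m_max.
  exact: C_adapted t _ t0 mG'.
- by move=> w t t0; apply: max_cvg; exact: C_right.
- move=> w t t0; have /cvg_ex[l Cl] := C_left w t t0.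
  by apply/cvg_ex; exists (Num.max l c'); exact: max_cvg.
- by move=> w s t s0 st; rewrite ge_max !le_max lexx !orbT C_nd.
- move=> w t t0; have [_ C_le] := C_bd w t t0.
  by rewrite le_max lexx orbT ge_max C_le.
Qed.

Lemma admissible_rate_path (c cbar : R) (C : R -> T -> R) w :
  admissible P x p N U c cbar C -> rate_path w c C.
Proof.
by case=> _ _ _ C_nd C_bd; split=> [s t|t t0]; [exact: C_nd|exact: (C_bd w t t0).1].
Qed.

End admissible_strategies.

Lemma value_V_le (R : realType) (d : measure_display) (T : measurableType d)
    (P : probability T R) (p q cbar x c1 c2 : R) (N : R -> T -> nat)
    (U : nat -> T -> R) :
  0 <= p -> 0 <= q -> 0 <= x -> p < c1 -> c1 <= c2 -> c2 <= cbar ->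
  (forall w s t, 0 <= s -> s <= t -> (N s w <= N t w)%N) ->
  (forall n w, 0 < U n w) ->
  (value_V P q cbar x p N U c1 <=
   value_V P q cbar x p N U c2 + (cbar * (c2 - c1) * x / (c1 - p) ^+ 2)%:E)%E.
Proof.
move=> p0 q0 x0 pc1 c12 c2b N_nd U_gt0.
set M := cbar * (c2 - c1) * x / (c1 - p) ^+ 2.
have M0 : 0 <= M.
  have cbar0 : 0 <= cbar.
    by rewrite (le_trans p0) // (le_trans (ltW pc1)) // (le_trans c12).
  by rewrite divr_ge0 ?sqr_ge0 // !mulr_ge0 // subr_ge0.
have rate_ge0 c K w s : p < c -> admissible P x p N U c cbar K -> 0 <= s -> 0 <= K s w.
  move=> pc K_adm s0; rewrite (le_trans p0) // (le_trans (ltW pc)) //.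
  exact: (admissible_rate_path w K_adm).2 s s0.
apply: ge_ereal_sup => _ [C C_adm <-].
set C' := fun t w => Num.max (C t w) c2.
have C'_adm : admissible P x p N U c2 cbar C' := admissible_max c2b C_adm.
apply: (@le_trans _ _ (value_J P q x p N U C' + M%:E)%E); last first.
  by rewrite leeD2r //; apply: ereal_sup_ubound; exists C'.
rewrite -[X in (_ + X)%E]mule1 -(probability_setT P).
apply: ge0_integral_le_shift => // [w|w|w].
- apply: integral_ge0 => s [s0 _]; rewrite lee_fin mulr_ge0 ?expR_ge0 //.
  exact: rate_ge0 pc1 C_adm s0.
- apply: integral_ge0 => s [s0 _]; rewrite lee_fin mulr_ge0 ?expR_ge0 //.
  exact: rate_ge0 (lt_le_trans pc1 c12) C'_adm s0.
have C_rate := admissible_rate_path w C_adm.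
have C'_rate : rate_path w c1 C'.
  case: (admissible_rate_path w C'_adm) => C'_nd C'_ge.
  by split=> // t t0; rewrite (le_trans c12) ?C'_ge.
apply: discounted_dividends_le => //; first exact: N_nd.
- by rewrite subr_ge0.
- by move=> t t0; case: C_adm => _ _ _ _ /(_ w t t0)[].
move=> t t0; rewrite /C' le_max lexx ge_max lerDl subr_ge0 c12 /=.
by have := C_rate.2 t t0; lra.
Qed.

Lemma leeBlDr_EFin (R : realDomainType) (a b : \bar R) (r : R) :
  (a <= b + r%:E)%E -> (a - b <= r%:E)%E.
Proof.
case: b => [b| |] abr.
- by rewrite leeBlDl.
- by rewrite /= addeNy leNye.
by move: abr; rewrite addNye leeNy_eq => /eqP ->; rewrite /= leNye.
Qed.

Theorem lemma9p4 (R : realType) (d : measure_display) (T : measurableType d)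
    (P : probability T R) (p beta q cbar Klip : R) (F : R -> R)
    (N : R -> T -> nat) (U : nat -> T -> R) :
  0 < p -> 0 < beta -> 0 < q -> 0 < cbar ->
  CL_model P beta F N U ->
  continuous F ->
  (forall x y, x < y -> 0 <= F y - F x /\ F y - F x <= Klip * (y - x)) ->
  (beta%:E * (\int[P]_w (U 0%N w)%:E) < p%:E)%E ->
  p < cbar ->
  exists K2 K3 : R, [/\ 0 < K2, 0 < K3 &
    forall x c1 c2, 0 <= x -> p < c1 -> c1 <= c2 -> c2 <= cbar ->
      (value_V P q cbar x p N U c1 - value_V P q cbar x p N U c2 <=
       ((K2 + K3 * x / (c1 - p) ^+ 2) * (c2 - c1))%:E)%E].
Proof.
move=> p0 _ q0 cbar0 [[_ N_nd _ _ _] _ _ [U_gt0 _] _] _ _ _ _.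
exists 1, cbar; split=> // x c1 c2 x0 pc1 c12 c2b.
apply: leeBlDr_EFin.
apply: le_trans (value_V_le P (ltW p0) (ltW q0) x0 pc1 c12 c2b N_nd U_gt0) _.
rewrite leeD2l // lee_fin.
have -> : (1 + cbar * x / (c1 - p) ^+ 2) * (c2 - c1) =
          (c2 - c1) + cbar * (c2 - c1) * x / (c1 - p) ^+ 2 by ring.
by rewrite lerDr subr_ge0.
Qed.
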